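(* Let $P$ and $Q$ be planar surfaces. If $P \rightsquigarrow Q$ and $Q \rightsquigarrow P$, then $P = Q$ (i.e. $P$ and $Q$ are the same point of $\tilde{\mathcal M}$). Consequently $\rightsquigarrow$ is a partial order on $\tilde{\mathcal M}$.
   Context: Let $\Delta$ be the open oriented topological $2$-disk with basepoint $x_0$. A pointed local homeomorphism is an orientation-preserving local homeomorphism $\phi:\Delta\to\mathbb R^2$ with $\phi(x_0)=\mathbf 0$ (this is the developing map of a translation structure on $\Delta$). Two such maps $\phi,\psi$ are isomorphic if $\psi=\phi\circ h^{-1}$ for some orientation-preserving homeomorphism $h$ of $\Delta$ fixing $x_0$. The moduli space $\tilde{\mathcal M}$ is the set of isomorphism classes. An element $P\in\tilde{\mathcal M}$ is called a planar surface; it is regarded as a topological open disk (a copy of $\Delta$ via any representative $\phi$) with a basepoint $o_P$ (the image of $x_0$) and a developing map $\mathrm{dev}_P:P\to\mathbb R^2$ (induced by $\phi$), an orientation-preserving local homeomorphism with $\mathrm{dev}_P(o_P)=\mathbf 0$; these structures are independent of the representative. For a planar surface $P$, $\mathrm{PC}(P)$ denotes the set of path-connected subsets of $P$ containing $o_P$. For $A\in\mathrm{PC}(P)$ and $B\in\mathrm{PC}(Q)$, an immersion $\iota:A\rightsquigarrow B$ is a continuous map $\iota:A\to B$ with $\iota(o_P)=o_Q$ and $\mathrm{dev}_Q\circ\iota=\mathrm{dev}_P$ on $A$; we write $A\rightsquigarrow B$ if an immersion exists. For planar surfaces, $P\rightsquigarrow Q$ means the whole surface $P$ immerses in $Q$.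 *)

From Stdlib Require Import Reals.
Open Scope R_scope.

Definition pt : Type := (R * R)%type.
Definition origin : pt := (0, 0).
Definition dist (p q : pt) : R :=
  sqrt ((fst p - fst q) ^ 2 + (snd p - snd q) ^ 2).

Definition cont_at (f : pt -> pt) (x : pt) : Prop :=
  forall eps, 0 < eps -> exists del, 0 < del /\
    forall y, dist x y < del -> dist (f x) (f y) < eps.
Definition continuous2 (f : pt -> pt) : Prop := forall x, cont_at f x.

Definition is_open (U : pt -> Prop) : Prop :=
  forall y, U y -> exists e, 0 < e /\ forall z, dist y z < e -> U z.

(* f is a local homeomorphism: continuous, and every point has an open
   neighbourhood on which f is injective and open (hence a homeomorphism
   onto an open image). *)
Definition local_homeo (f : pt -> pt) : Prop :=
  continuous2 f /\
  forall x, exists U : pt -> Prop,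
    is_open U /\ U x /\
    (forall y z, U y -> U z -> f y = f z -> y = z) /\
    (forall V : pt -> Prop, is_open V -> (forall y, V y -> U y) ->
        is_open (fun w => exists y, V y /\ f y = w)).

Definition homeo (h : pt -> pt) : Prop :=
  continuous2 h /\ exists g, continuous2 g /\
    (forall x, g (h x) = x) /\ (forall y, h (g y) = y).

Definition circ (x : pt) (s t : R) : pt :=
  (fst x + s * cos (2 * PI * t), snd x + s * sin (2 * PI * t)).

(* The loop gamma : [0,1] -> R^2 avoids p and has winding number +1 about p:
   there is a continuous angle lift theta on [0,1] with total increase 2*PI. *)
Definition winds_once (gamma : R -> pt) (p : pt) : Prop :=
  exists theta : R -> R,
    (forall t, 0 <= t <= 1 -> forall eps, 0 < eps -> exists del, 0 < del /\
       forall u, 0 <= u <= 1 -> Rabs (t - u) < del -> Rabs (theta t - theta u) < eps) /\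
    (forall t, 0 <= t <= 1 ->
       0 < dist (gamma t) p /\
       fst (gamma t) - fst p = dist (gamma t) p * cos (theta t) /\
       snd (gamma t) - snd p = dist (gamma t) p * sin (theta t)) /\
    theta 1 - theta 0 = 2 * PI.

(* Orientation preserving: small circles around every point are mapped to
   loops winding once (counterclockwise) around the image point, i.e. the
   local degree is +1 everywhere. *)
Definition orientation_preserving (f : pt -> pt) : Prop :=
  forall x, exists r, 0 < r /\ forall s, 0 < s < r ->
    winds_once (fun t => f (circ x s t)) (f x).

(* Pointed local homeomorphism Delta -> R^2, with Delta modelled as R^2
   (an open oriented 2-disk) and basepoint x0 = origin. *)
Definition pointed_lh (phi : pt -> pt) : Prop :=
  local_homeo phi /\ orientation_preserving phi /\ phi origin = origin.

(* Isomorphism of pointed local homeomorphisms: psi = phi o h^{-1}, i.e.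
   psi o h = phi, with h an orientation-preserving homeomorphism fixing x0.
   Two maps are isomorphic iff they define the same planar surface. *)
Definition iso (phi psi : pt -> pt) : Prop :=
  exists h, homeo h /\ orientation_preserving h /\ h origin = origin /\
    forall x, psi (h x) = phi x.

(* The planar surface of phi immerses in that of psi (P ~> Q):
   a continuous basepoint-preserving map iota with dev_Q o iota = dev_P. *)
Definition immerses (phi psi : pt -> pt) : Prop :=
  exists iota, continuous2 iota /\ iota origin = origin /\
    forall x, psi (iota x) = phi x.

(* Reflexivity, transitivity and invariance under isomorphism of the
   immersion relation follow by composing maps; the content is antisymmetry.
   Given immersions io : P ~> Q and ka : Q ~> P, the composite ka o io is a
   basepoint-preserving lift of dev_P through the locally injective dev_P,
   so it is the identity by uniqueness of lifts (proved along segments from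
   the origin by real induction); likewise io o ka = id.  So io is a
   homeomorphism with dev_Q o io = dev_P, and it remains to show that io
   preserves orientation.  Near x, a small circle around io x and the image
   under io of a small circle around x are both mapped by dev_Q to loops
   winding once around dev_P x; interpolating these in polar coordinates
   and pulling back by a local inverse of dev_Q gives a homotopy between
   the two loops avoiding io x.  Winding once is homotopy invariant (by a
   Rouche-type perturbation lemma), and the small circle winds once. *)

From Pilot Require Import Defs.
From Stdlib Require Import Reals Rgeom Lra ClassicalEpsilon Classical.
(* Re-import Defs so that [dist] refers to the plane metric, not to the
   metric-space projection exported by the real-analysis library. *)
Import Defs.
Open Scope R_scope.

Lemma dist_nonneg a b : 0 <= dist a b.
Proof. apply sqrt_pos. Qed.

Lemma dist_sym a b : dist a b = dist b a.
Proof. unfold dist. f_equal. ring. Qed.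

Lemma dist_self a : dist a a = 0.
Proof.
  unfold dist. replace ((fst a - fst a) ^ 2 + (snd a - snd a) ^ 2) with 0 by ring.
  apply sqrt_0.
Qed.

Lemma dist_triangle a b c : dist a c <= dist a b + dist b c.
Proof.
  pose proof (triangle (fst a) (snd a) (fst c) (snd c) (fst b) (snd b)) as H.
  unfold dist_euc, Rsqr in H. unfold dist. simpl. rewrite !Rmult_1_r. exact H.
Qed.

Lemma dist_fst_le a b : Rabs (fst a - fst b) <= dist a b.
Proof.
  unfold dist. rewrite <- sqrt_Rsqr_abs. apply sqrt_le_1_alt. unfold Rsqr.
  pose proof (pow2_ge_0 (snd a - snd b)). simpl in *. nra.
Qed.

Lemma dist_snd_le a b : Rabs (snd a - snd b) <= dist a b.
Proof.
  unfold dist. rewrite <- sqrt_Rsqr_abs. apply sqrt_le_1_alt. unfold Rsqr.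
  pose proof (pow2_ge_0 (fst a - fst b)). simpl in *. nra.
Qed.

Lemma dist_le_l1 a b : dist a b <= Rabs (fst a - fst b) + Rabs (snd a - snd b).
Proof.
  unfold dist. set (x := fst a - fst b). set (y := snd a - snd b).
  pose proof (Rabs_pos x); pose proof (Rabs_pos y).
  rewrite <- (sqrt_Rsqr (Rabs x + Rabs y)) by lra.
  apply sqrt_le_1_alt. unfold Rsqr.
  pose proof (Rsqr_abs x); pose proof (Rsqr_abs y). unfold Rsqr in *. simpl. nra.
Qed.

Lemma dist_pos a b : a <> b -> 0 < dist a b.
Proof.
  intro Hab. destruct (dist_nonneg a b) as [|H0]; auto. exfalso. apply Hab.
  pose proof (dist_fst_le a b) as H1. pose proof (dist_snd_le a b) as H2. rewrite <- H0 in *.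
  pose proof (Rabs_pos (fst a - fst b)); pose proof (Rabs_pos (snd a - snd b)).
  destruct a as [a1 a2], b as [b1 b2]; simpl in *.
  assert (a1 - b1 = 0) by (apply NNPP; intro E; apply (Rabs_no_R0 _ E); lra).
  assert (a2 - b2 = 0) by (apply NNPP; intro E; apply (Rabs_no_R0 _ E); lra).
  f_equal; lra.
Qed.

Lemma pt_eq (a b : pt) : fst a = fst b -> snd a = snd b -> a = b.
Proof. destruct a, b; simpl; intros; subst; auto. Qed.

Lemma dist_polar (q : pt) (r th : R) : 0 <= r ->
  dist (fst q + r * cos th, snd q + r * sin th) q = r.
Proof.
  intro Hr. unfold dist. simpl.
  replace ((fst q + r * cos th - fst q) * ((fst q + r * cos th - fst q) * 1) +
           (snd q + r * sin th - snd q) * ((snd q + r * sin th - snd q) * 1))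
    with (r * r * (Rsqr (sin th) + Rsqr (cos th))) by (unfold Rsqr; ring).
  rewrite sin2_cos2, Rmult_1_r. apply sqrt_square. auto.
Qed.

Lemma ball_open c r : is_open (fun z => dist c z < r).
Proof.
  intros z Hz. exists (r - dist c z). split. lra. intros z' Hz'.
  pose proof (dist_triangle c z z'). lra.
Qed.

Lemma continuous2_id : continuous2 (fun x => x).
Proof. intros x eps He. exists eps. split; auto. Qed.

Lemma continuous2_comp (f g : pt -> pt) :
  continuous2 f -> continuous2 g -> continuous2 (fun x => g (f x)).
Proof.
  intros Hf Hg x eps He. destruct (Hg (f x) eps He) as [d [Hd Hd']].
  destruct (Hf x d Hd) as [d2 [Hd2 Hd2']]. exists d2. split; auto.
Qed.

Lemma continuity_pt_elim f x : continuity_pt f x -> forall eps, 0 < eps ->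
  exists d, 0 < d /\ forall y, Rabs (y - x) < d -> Rabs (f y - f x) < eps.
Proof.
  intros H eps He. destruct (H eps He) as [d [Hd Hy]]. exists d. split; auto.
  intros y Hy'. destruct (Req_dec y x) as [->|Hne].
  - unfold Rminus. rewrite Rplus_opp_r, Rabs_R0. auto.
  - apply (Hy y). split; auto. split. exact I. auto.
Qed.

Lemma continuity_pt_intro f x : (forall eps, 0 < eps ->
  exists d, 0 < d /\ forall y, Rabs (y - x) < d -> Rabs (f y - f x) < eps) ->
  continuity_pt f x.
Proof.
  intros H eps He. destruct (H eps He) as [d [Hd Hy]]. exists d. split; auto.
  intros y [_ Hy']. apply Hy. exact Hy'.
Qed.

Lemma continuity_pt_id t : continuity_pt (fun t => t) t.
Proof. apply continuity_pt_intro. intros eps He. exists eps. split; auto. Qed.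

Lemma continuity_pt_cst (k : R) t : continuity_pt (fun _ => k) t.
Proof. apply continuity_pt_const. intros x y; reflexivity. Qed.

(* This is the form in which connectedness and compactness of [0,1] are
   used throughout. *)
Lemma real_induction (P : R -> Prop) :
  (forall t, 0 <= t <= 1 -> (forall s, 0 <= s < t -> P s) ->
     exists d, 0 < d /\ forall s, 0 <= s <= 1 -> s < t + d -> P s) ->
  forall t, 0 <= t <= 1 -> P t.
Proof.
  intros H.
  set (E := fun t => t <= 2 /\ forall s, 0 <= s <= 1 -> s < t -> P s).
  assert (Hb : bound E) by (exists 2; intros x [Hx _]; auto).
  assert (He : exists x, E x) by (exists 0; split; [lra | intros s Hs Hs'; lra]).
  destruct (completeness E Hb He) as [m [Hub Hlub]].
  assert (H0m : 0 <= m) by (apply Hub; split; [lra | intros; lra]).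
  assert (Hbelow : forall s, 0 <= s <= 1 -> s < m -> P s).
  { intros s Hs Hsm. apply NNPP. intro HP.
    assert (Hs2 : is_upper_bound E s).
    { intros x [Hx2 Hx]. destruct (Rle_lt_dec x s); auto. exfalso. apply HP, Hx; auto. }
    apply Hlub in Hs2. lra. }
  destruct (Rle_lt_dec m 1) as [Hm1|Hm1].
  - destruct (H m (conj H0m Hm1)) as [d [Hd Hd']].
    { intros s Hs. apply Hbelow; lra. }
    assert (Hm' : E (Rmin (m + d) 2)).
    { split. apply Rmin_r. intros s Hs Hs'. apply Hd'; auto. pose proof (Rmin_l (m + d) 2). lra. }
    apply Hub in Hm'. unfold Rmin in Hm'. destruct (Rle_dec (m + d) 2); lra.
  - intros t Ht. apply Hbelow; lra.
Qed.

Lemma uniform_on_unit_interval (Rl : R -> R -> Prop) :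
  (forall c c' s, 0 < c' <= c -> Rl c s -> Rl c' s) ->
  (forall t, 0 <= t <= 1 -> exists c, 0 < c /\
     exists d, 0 < d /\ forall s, Rabs (s - t) < d -> Rl c s) ->
  exists c, 0 < c /\ forall s, 0 <= s <= 1 -> Rl c s.
Proof.
  intros Hmon Hloc.
  assert (Hall : forall t, 0 <= t <= 1 ->
            exists c, 0 < c /\ forall s, 0 <= s <= t -> Rl c s).
  2:{ destruct (Hall 1 ltac:(lra)) as [c [Hc Hc']]. exists c. split; auto. }
  apply real_induction. intros t Ht IH. destruct (Hloc t Ht) as [c0 [Hc0 [d [Hd Hd']]]].
  set (s0 := Rmax 0 (t - d / 2)).
  pose proof (Rmax_l 0 (t - d / 2)) as M1. pose proof (Rmax_r 0 (t - d / 2)) as M2.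
  fold s0 in M1, M2.
  destruct (Rlt_le_dec s0 t) as [Hlt|Hge].
  - destruct (IH s0 ltac:(lra)) as [c1 [Hc1 Hc1']].
    exists d. split; auto. intros s Hs Hst. exists (Rmin c0 c1).
    split. apply Rmin_pos; auto.
    intros s' Hs'. destruct (Rle_lt_dec s' s0).
    + apply Hmon with c1. split. apply Rmin_pos; auto. apply Rmin_r. apply Hc1'. lra.
    + apply Hmon with c0. split. apply Rmin_pos; auto. apply Rmin_l. apply Hd'.
      apply Rabs_def1; lra.
  - assert (t = 0).
    { destruct (Req_dec t 0); auto. assert (s0 < t) by (apply Rmax_lub_lt; lra). lra. }
    exists d. split; auto. intros s Hs Hst. exists c0. split; auto.
    intros s' Hs'. apply Hd'. apply Rabs_def1; lra.
Qed.

Definition continuous_path (F : R -> pt) : Prop :=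
  forall t eps, 0 < eps -> exists del, 0 < del /\
    forall t', Rabs (t' - t) < del -> dist (F t) (F t') < eps.

Lemma continuous_path_comp (f : pt -> pt) F :
  continuous2 f -> continuous_path F -> continuous_path (fun t => f (F t)).
Proof.
  intros Hf HF t eps He. destruct (Hf (F t) eps He) as [d [Hd Hd']].
  destruct (HF t d Hd) as [d2 [Hd2 Hd2']]. exists d2. split; auto.
Qed.

Lemma continuous_path_fst F : continuous_path F ->
  forall t, continuity_pt (fun t => fst (F t)) t.
Proof.
  intros HF t. apply continuity_pt_intro. intros eps He.
  destruct (HF t eps He) as [d [Hd Hd']]. exists d. split; auto.
  intros y Hy. rewrite Rabs_minus_sym. eapply Rle_lt_trans. apply dist_fst_le. auto.
Qed.

Lemma continuous_path_snd F : continuous_path F ->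
  forall t, continuity_pt (fun t => snd (F t)) t.
Proof.
  intros HF t. apply continuity_pt_intro. intros eps He.
  destruct (HF t eps He) as [d [Hd Hd']]. exists d. split; auto.
  intros y Hy. rewrite Rabs_minus_sym. eapply Rle_lt_trans. apply dist_snd_le. auto.
Qed.

Lemma continuous_path_pair (a b : R -> R) :
  (forall t, continuity_pt a t) -> (forall t, continuity_pt b t) ->
  continuous_path (fun t => (a t, b t)).
Proof.
  intros Ha Hb t eps He.
  destruct (continuity_pt_elim a t (Ha t) (eps / 2)) as [d1 [Hd1 Hd1']]; [lra|].
  destruct (continuity_pt_elim b t (Hb t) (eps / 2)) as [d2 [Hd2 Hd2']]; [lra|].
  exists (Rmin d1 d2). split. apply Rmin_pos; auto. intros t' Ht.
  pose proof (Rmin_l d1 d2). pose proof (Rmin_r d1 d2).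
  specialize (Hd1' t' ltac:(lra)). specialize (Hd2' t' ltac:(lra)).
  eapply Rle_lt_trans. apply dist_le_l1. simpl.
  rewrite (Rabs_minus_sym (a t)), (Rabs_minus_sym (b t)). lra.
Qed.

Lemma continuity_pt_dist F q : continuous_path F ->
  forall t, continuity_pt (fun t => dist (F t) q) t.
Proof.
  intros HF t. apply continuity_pt_intro. intros eps He.
  destruct (HF t eps He) as [d [Hd Hd']].
  exists d. split; auto. intros y Hy. specialize (Hd' y Hy).
  pose proof (dist_triangle (F y) (F t) q). pose proof (dist_triangle (F t) (F y) q).
  rewrite (dist_sym (F y) (F t)) in *. apply Rabs_def1; lra.
Qed.

Lemma path_min_dist (F : R -> pt) (p : pt) :
  continuous_path F -> (forall t, 0 <= t <= 1 -> F t <> p) ->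
  exists m, 0 < m /\ forall t, 0 <= t <= 1 -> m <= dist (F t) p.
Proof.
  intros HF Hne. apply (uniform_on_unit_interval (fun m s => m <= dist (F s) p)).
  - intros; lra.
  - intros t Ht. pose proof (dist_pos _ _ (Hne t Ht)) as HD.
    exists (dist (F t) p / 2). split. lra.
    destruct (HF t (dist (F t) p / 2)) as [d [Hd Hd']]; [lra|].
    exists d. split; auto. intros s Hs. specialize (Hd' s Hs).
    pose proof (dist_triangle (F t) (F s) p). lra.
Qed.

Definition segment (y : pt) (t : R) : pt := (t * fst y, t * snd y).

Lemma segment_continuous y : continuous_path (segment y).
Proof.
  apply continuous_path_pair; intro t;
    apply (continuity_pt_mult (fun t => t) (fun _ => _));
    auto using continuity_pt_id, continuity_pt_cst.
Qed.

Lemma paths_agree_at_limit (F G : R -> pt) (t : R) :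
  continuous_path F -> continuous_path G -> 0 < t ->
  (forall s, 0 <= s < t -> F s = G s) -> F t = G t.
Proof.
  intros HF HG Ht Hbelow. apply NNPP. intro Hne. pose proof (dist_pos _ _ Hne) as Hd0.
  set (d0 := dist (F t) (G t)) in *.
  destruct (HF t (d0 / 2)) as [d1 [Hd1 Hd1']]; [lra|].
  destruct (HG t (d0 / 2)) as [d2 [Hd2 Hd2']]; [lra|].
  pose proof (Rmin_l d1 d2). pose proof (Rmin_r d1 d2).
  assert (Hd : 0 < Rmin d1 d2) by (apply Rmin_pos; auto).
  set (d := Rmin d1 d2) in *.
  set (s := Rmax 0 (t - d / 2)).
  pose proof (Rmax_l 0 (t - d / 2)) as M1. pose proof (Rmax_r 0 (t - d / 2)) as M2.
  assert (Hst : s < t) by (apply Rmax_lub_lt; lra).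
  fold s in M1, M2. assert (Hs : Rabs (s - t) < d) by (rewrite Rabs_left; lra).
  pose proof (Hd1' s ltac:(lra)) as A1. pose proof (Hd2' s ltac:(lra)) as A2.
  pose proof (dist_triangle (F t) (F s) (G t)) as A3.
  rewrite (Hbelow s ltac:(lra)), (dist_sym (G s)) in A3. rewrite (Hbelow s ltac:(lra)) in A1.
  fold d0 in A3. lra.
Qed.

(* Uniqueness of lifts through a locally injective map: two continuous
   maps of the plane that agree at the origin and have the same image under
   phi agree everywhere.  Along the segment to y, the set of parameters
   where they agree is closed (by continuity) and open (by local
   injectivity), so real induction covers the whole segment. *)
Definition locally_injective (phi : pt -> pt) : Prop :=
  forall x, exists U, is_open U /\ U x /\
    forall y z, U y -> U z -> phi y = phi z -> y = z.

Lemma local_homeo_locally_injective (phi : pt -> pt) :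
  local_homeo phi -> locally_injective phi.
Proof. intros [_ H] x. destruct (H x) as [U [A [B [C _]]]]. exists U. auto. Qed.

Lemma lifts_unique (phi f g : pt -> pt) :
  locally_injective phi -> continuous2 f -> continuous2 g ->
  f origin = g origin -> (forall x, phi (f x) = phi (g x)) ->
  forall y, f y = g y.
Proof.
  intros Hphi Hf Hg H0 Hfg y.
  assert (HF := continuous_path_comp f (segment y) Hf (segment_continuous y)).
  assert (HG := continuous_path_comp g (segment y) Hg (segment_continuous y)).
  assert (Hall : forall t, 0 <= t <= 1 -> f (segment y t) = g (segment y t)).
  { apply real_induction. intros t Ht IH.
    assert (Pt : f (segment y t) = g (segment y t)).
    { destruct (Req_dec t 0) as [->|Htn].
      - unfold segment. rewrite !Rmult_0_l. exact H0.
      - apply (paths_agree_at_limit (fun t => f (segment y t)) (fun t => g (segment y t)));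
          auto; lra. }
    destruct (Hphi (f (segment y t))) as [U [HU [HUx HUi]]].
    destruct (HU _ HUx) as [e [He He']].
    destruct (HF t e He) as [d1 [Hd1 Hd1']].
    destruct (HG t e He) as [d2 [Hd2 Hd2']].
    exists (Rmin d1 d2). split. apply Rmin_pos; auto.
    intros s Hs Hs'. destruct (Rlt_le_dec s t). apply IH; lra.
    assert (Rabs (s - t) < Rmin d1 d2) by (rewrite Rabs_right; lra).
    pose proof (Rmin_l d1 d2). pose proof (Rmin_r d1 d2).
    apply HUi; [apply He', Hd1'; lra | apply He'; rewrite Pt; apply Hd2'; lra | apply Hfg]. }
  specialize (Hall 1 ltac:(lra)). unfold segment in Hall. rewrite !Rmult_1_l in Hall.
  destruct y; exact Hall.
Qed.

(* The angle from a to b seen from p is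
   read off from the inner and cross products of a - p and b - p; it is a
   continuous function of a and b as long as the inner product is
   positive, which is the case when b is closer to a than a is to p. *)

Definition inner_at (p a b : pt) : R :=
  (fst a - fst p) * (fst b - fst p) + (snd a - snd p) * (snd b - snd p).

Definition cross_at (p a b : pt) : R :=
  (fst a - fst p) * (snd b - snd p) - (snd a - snd p) * (fst b - fst p).

Definition angle_between (p a b : pt) : R := atan (cross_at p a b / inner_at p a b).

Lemma inner_at_pos_of_close (p a b : pt) : dist b a < dist a p -> 0 < inner_at p a b.
Proof.
  intro Hclose. unfold dist in Hclose. apply sqrt_lt_0_alt in Hclose. unfold inner_at.
  destruct a as [x1 x2], b as [y1 y2], p as [p1 p2]. simpl in *.
  pose proof (Rle_0_sqr (y1 - p1)); pose proof (Rle_0_sqr (y2 - p2)). unfold Rsqr in *. nra.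
Qed.

Lemma polar_rotation (A th b1 b2 : R) : 0 < A ->
  0 < (A * cos th) * b1 + (A * sin th) * b2 ->
  let ang := atan (((A * cos th) * b2 - (A * sin th) * b1) /
                   ((A * cos th) * b1 + (A * sin th) * b2)) in
  0 < sqrt (b1 ^ 2 + b2 ^ 2) /\
  b1 = sqrt (b1 ^ 2 + b2 ^ 2) * cos (th + ang) /\
  b2 = sqrt (b1 ^ 2 + b2 ^ 2) * sin (th + ang).
Proof.
  intros HA Hdot ang. unfold ang.
  set (c := cos th) in *. set (s := sin th) in *.
  assert (Hcs : s ^ 2 + c ^ 2 = 1)
    by (pose proof (sin2_cos2 th) as H; unfold Rsqr in H; fold c s in H; simpl; lra).
  set (dot := A * c * b1 + A * s * b2) in *.
  set (cr := A * c * b2 - A * s * b1).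
  set (B := sqrt (b1 ^ 2 + b2 ^ 2)).
  assert (HBsq : B * B = b1 ^ 2 + b2 ^ 2) by (apply sqrt_sqrt; nra).
  assert (HB : 0 < B).
  { apply sqrt_lt_R0. destruct (Req_dec b1 0) as [E1|E1]; destruct (Req_dec b2 0) as [E2|E2].
    - subst dot. rewrite E1, E2 in Hdot. lra.
    - pose proof (Rsqr_pos_lt b2 E2) as X; unfold Rsqr in X; nra.
    - pose proof (Rsqr_pos_lt b1 E1) as X; unfold Rsqr in X; nra.
    - pose proof (Rsqr_pos_lt b1 E1) as X; unfold Rsqr in X; nra. }
  assert (Hlag : dot ^ 2 + cr ^ 2 = (A * B) ^ 2).
  { unfold dot, cr. replace ((A * B) ^ 2) with (A ^ 2 * (B * B)) by ring. rewrite HBsq.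
    transitivity (A ^ 2 * (s ^ 2 + c ^ 2) * (b1 ^ 2 + b2 ^ 2)); [ring | rewrite Hcs; ring]. }
  assert (Hsq : sqrt (1 + (cr / dot)²) = A * B / dot).
  { rewrite <- (sqrt_Rsqr (A * B / dot)) by (apply Rlt_le, Rdiv_lt_0_compat; nra).
    f_equal. unfold Rsqr. field_simplify; [|lra|lra].
    replace (cr ^ 2 + dot ^ 2) with ((A * B) ^ 2) by lra. unfold Rdiv. ring. }
  rewrite cos_plus, sin_plus, cos_atan, sin_atan, Hsq. fold B c s.
  assert (E1 : c * dot - s * cr = A * b1).
  { unfold dot, cr. transitivity (A * b1 * (s ^ 2 + c ^ 2)); [ring | rewrite Hcs; ring]. }
  assert (E2 : s * dot + c * cr = A * b2).
  { unfold dot, cr. transitivity (A * b2 * (s ^ 2 + c ^ 2)); [ring | rewrite Hcs; ring]. }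
  split; [auto | split].
  - replace (B * (c * (1 / (A * B / dot)) - s * (cr / dot / (A * B / dot))))
      with ((c * dot - s * cr) / A) by (field; repeat split; lra).
    rewrite E1. field. lra.
  - replace (B * (s * (1 / (A * B / dot)) + c * (cr / dot / (A * B / dot))))
      with ((s * dot + c * cr) / A) by (field; repeat split; lra).
    rewrite E2. field. lra.
Qed.

Lemma angle_between_polar (p a b : pt) (th : R) :
  0 < dist a p -> fst a - fst p = dist a p * cos th -> snd a - snd p = dist a p * sin th ->
  0 < inner_at p a b ->
  0 < dist b p /\
  fst b - fst p = dist b p * cos (th + angle_between p a b) /\
  snd b - snd p = dist b p * sin (th + angle_between p a b).
Proof.
  intros HA E1 E2 Hinner. unfold angle_between, cross_at.
  unfold inner_at in *. rewrite E1, E2 in *.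
  exact (polar_rotation (dist a p) th (fst b - fst p) (snd b - snd p) HA Hinner).
Qed.

Lemma angle_between_continuous (alpha beta : R -> pt) (p : pt) (t : R) :
  continuous_path alpha -> continuous_path beta -> 0 < inner_at p (alpha t) (beta t) ->
  continuity_pt (fun t => angle_between p (alpha t) (beta t)) t.
Proof.
  intros Ha Hb Hinner.
  assert (Cx : forall F, continuous_path F -> continuity_pt (fun t => fst (F t) - fst p) t)
    by (intros F HF; apply (continuity_pt_minus (fun t => fst (F t)) (fun _ => fst p));
        auto using continuous_path_fst, continuity_pt_cst).
  assert (Cy : forall F, continuous_path F -> continuity_pt (fun t => snd (F t) - snd p) t)
    by (intros F HF; apply (continuity_pt_minus (fun t => snd (F t)) (fun _ => snd p));
        auto using continuous_path_snd, continuity_pt_cst).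
  assert (Ci : continuity_pt (fun t => inner_at p (alpha t) (beta t)) t).
  { unfold inner_at. apply continuity_pt_plus; apply continuity_pt_mult; auto. }
  assert (Cc : continuity_pt (fun t => cross_at p (alpha t) (beta t)) t).
  { unfold cross_at. apply continuity_pt_minus; apply continuity_pt_mult; auto. }
  apply (continuity_pt_comp (fun t => cross_at p (alpha t) (beta t) / inner_at p (alpha t) (beta t)) atan).
  - apply continuity_pt_div; auto. lra.
  - apply derivable_continuous_pt, derivable_pt_atan.
Qed.

(* Rouche-type perturbation: a closed loop that stays closer to a loop
   winding once around p than that loop is to p also winds once around p;
   its angle is the old angle corrected by the angle between the loops. *)
Lemma winds_once_perturb (alpha beta : R -> pt) (p : pt) :
  continuous_path alpha -> continuous_path beta -> winds_once alpha p ->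
  alpha 0 = alpha 1 -> beta 0 = beta 1 ->
  (forall t, 0 <= t <= 1 -> dist (beta t) (alpha t) < dist (alpha t) p) ->
  winds_once beta p.
Proof.
  intros Ha Hb [th [Hth [Hpol Hwind]]] Ha01 Hb01 Hclose.
  set (del := fun t => angle_between p (alpha t) (beta t)).
  assert (Hinner : forall t, 0 <= t <= 1 -> 0 < inner_at p (alpha t) (beta t))
    by (intros t Ht; apply inner_at_pos_of_close, Hclose; auto).
  exists (fun t => th t + del t). split; [|split].
  - intros t Ht eps He. destruct (Hth t Ht (eps / 2)) as [d1 [Hd1 Hd1']]; [lra|].
    destruct (continuity_pt_elim _ _ (angle_between_continuous alpha beta p t Ha Hb (Hinner t Ht))
                (eps / 2)) as [d2 [Hd2 Hd2']]; [lra|].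
    exists (Rmin d1 d2). split. apply Rmin_pos; auto.
    intros u Hu Htu. pose proof (Rmin_l d1 d2). pose proof (Rmin_r d1 d2).
    specialize (Hd1' u Hu ltac:(lra)). specialize (Hd2' u ltac:(rewrite Rabs_minus_sym; lra)).
    replace (th t + del t - (th u + del u)) with ((th t - th u) + - (del u - del t)) by ring.
    eapply Rle_lt_trans. apply Rabs_triang. rewrite Rabs_Ropp. unfold del. lra.
  - intros t Ht. destruct (Hpol t Ht) as [HA [E1 E2]].
    exact (angle_between_polar p (alpha t) (beta t) (th t) HA E1 E2 (Hinner t Ht)).
  - assert (del 1 = del 0) as E by (unfold del; rewrite Ha01, Hb01; reflexivity).
    rewrite E. lra.
Qed.

Lemma winds_once_ext g1 g2 p : (forall t, 0 <= t <= 1 -> g1 t = g2 t) ->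
  winds_once g1 p -> winds_once g2 p.
Proof.
  intros E [th [H1 [H2 H3]]]. exists th. split; auto. split; auto.
  intros t Ht. rewrite <- (E t Ht). auto.
Qed.

Lemma circ_dist x s t : 0 <= s -> dist (circ x s t) x = s.
Proof. intros. unfold circ. apply dist_polar. auto. Qed.

Lemma circ_closed x s : circ x s 0 = circ x s 1.
Proof.
  unfold circ. rewrite !Rmult_0_r, !Rmult_1_r, cos_0, sin_0, cos_2PI, sin_2PI. reflexivity.
Qed.

Lemma circ_continuous x s : continuous_path (circ x s).
Proof.
  assert (Hlin : forall t, continuity_pt (fun t => 2 * PI * t) t)
    by (intro t; apply (continuity_pt_mult (fun _ => 2 * PI) (fun t => t));
        auto using continuity_pt_cst, continuity_pt_id).
  unfold circ. apply continuous_path_pair; intro t;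
    apply continuity_pt_plus; auto using continuity_pt_cst;
    apply continuity_pt_mult; auto using continuity_pt_cst;
    apply (continuity_pt_comp (fun t => 2 * PI * t)); auto using continuity_cos, continuity_sin.
Qed.

Lemma winds_once_circ x s : 0 < s -> winds_once (circ x s) x.
Proof.
  intros Hs. pose proof PI_RGT_0. exists (fun t => 2 * PI * t). split; [|split].
  - intros t Ht eps He. exists (eps / (2 * PI)). split. apply Rdiv_lt_0_compat; lra.
    intros u Hu Htu. replace (2 * PI * t - 2 * PI * u) with (2 * PI * (t - u)) by ring.
    rewrite Rabs_mult, (Rabs_right (2 * PI)) by lra.
    apply Rmult_lt_reg_l with (/ (2 * PI)). apply Rinv_0_lt_compat; lra.
    rewrite <- Rmult_assoc, Rinv_l by lra. unfold Rdiv in Htu. lra.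
  - intros t Ht. rewrite circ_dist by lra. split; auto. unfold circ; simpl. split; ring.
  - ring.
Qed.

Definition continuous_family (G : R -> R -> pt) : Prop :=
  forall u t eps, 0 < eps -> exists del, 0 < del /\
    forall u' t', Rabs (u' - u) < del -> Rabs (t' - t) < del -> dist (G u t) (G u' t') < eps.

Lemma continuous_family_path G u : continuous_family G -> continuous_path (G u).
Proof.
  intros HG t eps He. destruct (HG u t eps He) as [d [Hd Hd']]. exists d. split; auto.
  intros t' Ht'. apply Hd'; auto. unfold Rminus. rewrite Rplus_opp_r, Rabs_R0. auto.
Qed.

Lemma continuous_family_uniform (G : R -> R -> pt) u0 eta :
  continuous_family G -> 0 < eta ->
  exists d, 0 < d /\ forall s, 0 <= s <= 1 ->
    forall u, Rabs (u - u0) < d -> dist (G u s) (G u0 s) < eta.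
Proof.
  intros HG He.
  apply (uniform_on_unit_interval
           (fun d s => forall u, Rabs (u - u0) < d -> dist (G u s) (G u0 s) < eta)).
  - intros c c' s Hc H u Hu. apply H. lra.
  - intros t Ht. destruct (HG u0 t (eta / 2)) as [d [Hd Hd']]; [lra|].
    exists d. split; auto. exists d. split; auto. intros s Hs u Hu.
    pose proof (Hd' u s Hu Hs) as X1.
    pose proof (Hd' u0 s ltac:(unfold Rminus; rewrite Rplus_opp_r, Rabs_R0; auto) Hs) as X2.
    pose proof (dist_triangle (G u s) (G u0 t) (G u0 s)) as X3.
    rewrite (dist_sym (G u s) (G u0 t)) in X3. lra.
Qed.

(* Winding once is invariant under homotopies of closed loops avoiding p:
   by real induction on the homotopy parameter, each loop is a small
   perturbation of an earlier one. *)
Lemma winds_once_homotopy (G : R -> R -> pt) (p : pt) : continuous_family G ->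
  (forall u t, 0 <= u <= 1 -> 0 <= t <= 1 -> G u t <> p) ->
  (forall u, 0 <= u <= 1 -> G u 0 = G u 1) -> winds_once (G 0) p ->
  forall u, 0 <= u <= 1 -> winds_once (G u) p.
Proof.
  intros HG Hne Hloop H0. apply real_induction. intros u Hu IH.
  destruct (path_min_dist (G u) p (continuous_family_path G u HG) (fun t Ht => Hne u t Hu Ht))
    as [m [Hm Hm']].
  destruct (continuous_family_uniform G u (m / 4) HG ltac:(lra)) as [d [Hd Hd']].
  set (ua := Rmax 0 (u - d / 2)).
  pose proof (Rmax_l 0 (u - d / 2)) as M1. pose proof (Rmax_r 0 (u - d / 2)) as M2.
  fold ua in M1, M2.
  assert (Hua_le : ua <= u) by (apply Rmax_lub; lra).
  assert (Hua : winds_once (G ua) p).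
  { destruct (Rlt_le_dec ua u). apply IH; lra.
    assert (u = 0).
    { destruct (Req_dec u 0); auto. assert (ua < u) by (apply Rmax_lub_lt; lra). lra. }
    replace ua with 0 by lra. auto. }
  exists d. split; auto. intros u' Hu' Hu'd.
  destruct (Rle_lt_dec u' (u - d)). { apply IH; lra. }
  apply winds_once_perturb with (G ua);
    [apply continuous_family_path; auto | apply continuous_family_path; auto | auto
    | apply Hloop; lra | apply Hloop; lra |].
  intros t Ht. pose proof (Hd' t Ht u' ltac:(apply Rabs_def1; lra)).
  pose proof (Hd' t Ht ua ltac:(apply Rabs_def1; lra)). pose proof (Hm' t Ht).
  pose proof (dist_triangle (G u' t) (G u t) (G ua t)).
  pose proof (dist_triangle (G u t) (G ua t) p).
  rewrite (dist_sym (G u t) (G ua t)) in *. lra.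
Qed.

Definition jointly_continuous (f : R -> R -> R) : Prop :=
  forall u t eps, 0 < eps -> exists del, 0 < del /\
    forall u' t', Rabs (u' - u) < del -> Rabs (t' - t) < del -> Rabs (f u' t' - f u t) < eps.

Lemma jointly_continuous_fst : jointly_continuous (fun u t => u).
Proof. intros u t eps He. exists eps. split; auto. Qed.

Lemma jointly_continuous_snd (a : R -> R) :
  (forall t, continuity_pt a t) -> jointly_continuous (fun u t => a t).
Proof.
  intros Ha u t eps He. destruct (continuity_pt_elim a t (Ha t) eps He) as [d [Hd Hd']].
  exists d. split; auto.
Qed.

Lemma jointly_continuous_cst k : jointly_continuous (fun u t => k).
Proof.
  intros u t eps He. exists 1. split. lra. intros.
  unfold Rminus. rewrite Rplus_opp_r, Rabs_R0. auto.
Qed.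

Lemma jointly_continuous_plus f g : jointly_continuous f -> jointly_continuous g ->
  jointly_continuous (fun u t => f u t + g u t).
Proof.
  intros Hf Hg u t eps He. destruct (Hf u t (eps / 2)) as [d1 [Hd1 Hd1']]; [lra|].
  destruct (Hg u t (eps / 2)) as [d2 [Hd2 Hd2']]; [lra|].
  exists (Rmin d1 d2). split. apply Rmin_pos; auto. intros u' t' Hu Ht.
  pose proof (Rmin_l d1 d2). pose proof (Rmin_r d1 d2).
  specialize (Hd1' u' t' ltac:(lra) ltac:(lra)). specialize (Hd2' u' t' ltac:(lra) ltac:(lra)).
  replace (f u' t' + g u' t' - (f u t + g u t)) with ((f u' t' - f u t) + (g u' t' - g u t)) by ring.
  eapply Rle_lt_trans. apply Rabs_triang. lra.
Qed.

Lemma jointly_continuous_mult f g : jointly_continuous f -> jointly_continuous g ->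
  jointly_continuous (fun u t => f u t * g u t).
Proof.
  intros Hf Hg u t eps He.
  set (f0 := f u t). set (g0 := g u t).
  pose proof (Rabs_pos f0). pose proof (Rabs_pos g0).
  set (kf := eps / (2 * (Rabs g0 + 1))). set (kg := eps / (2 * (Rabs f0 + 2))).
  assert (Hkf : 0 < kf) by (apply Rdiv_lt_0_compat; lra).
  assert (Hkg : 0 < kg) by (apply Rdiv_lt_0_compat; lra).
  destruct (Hf u t (Rmin 1 kf)) as [d1 [Hd1 Hd1']]; [apply Rmin_pos; lra|].
  destruct (Hg u t kg Hkg) as [d2 [Hd2 Hd2']].
  exists (Rmin d1 d2). split. apply Rmin_pos; auto. intros u' t' Hu Ht.
  pose proof (Rmin_l d1 d2). pose proof (Rmin_r d1 d2).
  specialize (Hd1' u' t' ltac:(lra) ltac:(lra)). specialize (Hd2' u' t' ltac:(lra) ltac:(lra)).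
  fold f0 g0 in Hd1', Hd2'. fold f0 g0.
  pose proof (Rmin_l 1 kf). pose proof (Rmin_r 1 kf).
  replace (f u' t' * g u' t' - f0 * g0) with (f u' t' * (g u' t' - g0) + g0 * (f u' t' - f0)) by ring.
  eapply Rle_lt_trans. apply Rabs_triang. rewrite !Rabs_mult.
  assert (Hfb : Rabs (f u' t') <= Rabs f0 + 1).
  { replace (f u' t') with (f0 + (f u' t' - f0)) by ring.
    eapply Rle_trans. apply Rabs_triang. lra. }
  assert (A1 : Rabs (f u' t') * Rabs (g u' t' - g0) <= (Rabs f0 + 1) * kg)
    by (apply Rmult_le_compat; try apply Rabs_pos; lra).
  assert (A1' : (Rabs f0 + 1) * kg < eps / 2).
  { apply Rlt_le_trans with ((Rabs f0 + 2) * kg). nra. unfold kg. right. field. lra. }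
  assert (A2 : Rabs g0 * Rabs (f u' t' - f0) <= (Rabs g0 + 1) * kf)
    by (apply Rmult_le_compat; try apply Rabs_pos; lra).
  replace ((Rabs g0 + 1) * kf) with (eps / 2) in A2 by (unfold kf; field; lra).
  lra.
Qed.

Lemma jointly_continuous_comp (h : R -> R) f : (forall x, continuity_pt h x) ->
  jointly_continuous f -> jointly_continuous (fun u t => h (f u t)).
Proof.
  intros Hh Hf u t eps He.
  destruct (continuity_pt_elim h (f u t) (Hh _) eps He) as [d [Hd Hd']].
  destruct (Hf u t d Hd) as [d2 [Hd2 Hd2']]. exists d2. split; auto.
Qed.

Lemma continuous_family_pair f g : jointly_continuous f -> jointly_continuous g ->
  continuous_family (fun u t => (f u t, g u t)).
Proof.
  intros Hf Hg u t eps He. destruct (Hf u t (eps / 2)) as [d1 [Hd1 Hd1']]; [lra|].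
  destruct (Hg u t (eps / 2)) as [d2 [Hd2 Hd2']]; [lra|].
  exists (Rmin d1 d2). split. apply Rmin_pos; auto. intros u' t' Hu Ht.
  pose proof (Rmin_l d1 d2). pose proof (Rmin_r d1 d2).
  specialize (Hd1' u' t' ltac:(lra) ltac:(lra)). specialize (Hd2' u' t' ltac:(lra) ltac:(lra)).
  eapply Rle_lt_trans. apply dist_le_l1. simpl.
  rewrite (Rabs_minus_sym (f u t)), (Rabs_minus_sym (g u t)). lra.
Qed.

Lemma continuous_family_comp (g : pt -> pt) G : continuous_family G ->
  (forall u t, cont_at g (G u t)) -> continuous_family (fun u t => g (G u t)).
Proof.
  intros HG Hg u t eps He. destruct (Hg u t eps He) as [d [Hd Hd']].
  destruct (HG u t d Hd) as [d2 [Hd2 Hd2']]. exists d2. split; auto.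
Qed.

(* Clamping to [0,1] extends a function continuous on [0,1] (such as an
   angle lift) to a continuous function on the whole line. *)
Definition clamp (t : R) : R := Rmax 0 (Rmin 1 t).

Lemma clamp_in t : 0 <= clamp t <= 1.
Proof. unfold clamp, Rmax, Rmin. destruct (Rle_dec 1 t); destruct (Rle_dec 0 _); lra. Qed.

Lemma clamp_id t : 0 <= t <= 1 -> clamp t = t.
Proof. intros. unfold clamp, Rmax, Rmin. destruct (Rle_dec 1 t); destruct (Rle_dec 0 _); lra. Qed.

Lemma clamp_lipschitz a b : Rabs (clamp a - clamp b) <= Rabs (a - b).
Proof.
  unfold clamp, Rmax, Rmin.
  destruct (Rle_dec 1 a); destruct (Rle_dec 1 b); repeat (destruct (Rle_dec 0 _));
  unfold Rabs; repeat (destruct (Rcase_abs _)); lra.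
Qed.

Lemma clamp_continuous t : continuity_pt clamp t.
Proof.
  apply continuity_pt_intro. intros eps He. exists eps. split; auto. intros y Hy.
  eapply Rle_lt_trans. apply clamp_lipschitz. auto.
Qed.

Lemma clamp_extension_continuous (th : R -> R) :
  (forall t, 0 <= t <= 1 -> forall eps, 0 < eps -> exists del, 0 < del /\
       forall u, 0 <= u <= 1 -> Rabs (t - u) < del -> Rabs (th t - th u) < eps) ->
  forall t, continuity_pt (fun t => th (clamp t)) t.
Proof.
  intros Hth t. apply continuity_pt_intro. intros eps He.
  destruct (Hth (clamp t) (clamp_in t) eps He) as [d [Hd Hd']].
  exists d. split; auto. intros y Hy. rewrite Rabs_minus_sym. apply Hd'. apply clamp_in.
  eapply Rle_lt_trans. apply clamp_lipschitz. rewrite Rabs_minus_sym. auto.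
Qed.

(* The inverse is chosen by indefinite description on the
   image of the ball, where psi is injective; its continuity comes from
   psi being open on that ball. *)
Lemma local_homeo_local_inverse (psi : pt -> pt) y : local_homeo psi ->
  exists e, 0 < e /\ exists eps, 0 < eps /\ exists g : pt -> pt,
    (forall z, dist y z < e -> g (psi z) = z) /\
    (forall w, dist (psi y) w < eps -> psi (g w) = w /\ cont_at g w).
Proof.
  intros [Hc Hl]. destruct (Hl y) as [U [HU [HUy [HUi HUo]]]].
  destruct (HU y HUy) as [e [He He']].
  set (V := fun z => dist y z < e).
  assert (HVU : forall z, V z -> U z) by (intros; apply He'; auto).
  destruct (HUo V (ball_open y e) HVU (psi y)) as [eps [Heps Heps']].
  { exists y. split; auto. unfold V. rewrite dist_self. auto. }
  set (g := fun w => epsilon (inhabits origin) (fun v => V v /\ psi v = w)).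
  assert (Hg : forall w, (exists v, V v /\ psi v = w) -> V (g w) /\ psi (g w) = w)
    by (intros w Hw; apply (epsilon_spec (inhabits origin) (fun v => V v /\ psi v = w)); auto).
  assert (Hg_on_image : forall w, dist (psi y) w < eps -> V (g w) /\ psi (g w) = w)
    by (intros w Hw; apply Hg, Heps'; auto).
  exists e. split; auto. exists eps. split; auto. exists g. split.
  { intros z Hz. destruct (Hg (psi z)) as [Hv Hp]. exists z. split; auto. apply HUi; auto. }
  intros w Hw. destruct (Hg_on_image w Hw) as [Gw1 Gw2]. split; auto.
  intros eta Heta.
  set (V' := fun z => dist (g w) z < eta /\ dist y z < e).
  assert (HV'o : is_open V').
  { intros z [Hz1 Hz2]. destruct (ball_open (g w) eta z Hz1) as [e1 [He1 He1']].
    destruct (ball_open y e z Hz2) as [e2 [He2 He2']].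
    exists (Rmin e1 e2). split. apply Rmin_pos; auto. intros z' Hz'.
    pose proof (Rmin_l e1 e2). pose proof (Rmin_r e1 e2). split; [apply He1'|apply He2']; lra. }
  destruct (HUo V' HV'o (fun z Hz => HVU z (proj2 Hz)) w) as [d1 [Hd1 Hd1']].
  { exists (g w). split; auto. split; auto. rewrite dist_self. auto. }
  destruct (ball_open (psi y) eps w Hw) as [d2 [Hd2 Hd2']].
  exists (Rmin d1 d2). split. apply Rmin_pos; auto. intros w' Hw'.
  pose proof (Rmin_l d1 d2). pose proof (Rmin_r d1 d2).
  destruct (Hd1' w' ltac:(lra)) as [z [[Hz1 Hz2] Hz3]].
  destruct (Hg_on_image w' (Hd2' w' ltac:(lra))) as [Gw'1 Gw'2].
  replace (g w') with z; auto.
  apply HUi; [apply HVU; auto | apply HVU; auto | congruence].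
Qed.

Lemma convex_comb_bounds (c a b eps : R) : 0 <= c <= 1 ->
  0 < a < eps -> 0 < b < eps -> 0 < (1 - c) * a + c * b < eps.
Proof.
  intros Hc Ha Hb.
  assert (0 <= c * a) by (apply Rmult_le_pos; lra).
  assert (0 <= (1 - c) * b) by (apply Rmult_le_pos; lra).
  destruct (Rle_dec a b); [assert (0 <= c * (b - a)) | assert (0 <= (1 - c) * (a - b))];
    try (apply Rmult_le_pos; lra); nra.
Qed.

Definition polar_family (q : pt) (Rr Th : R -> R -> R) (u t : R) : pt :=
  (fst q + Rr u t * cos (Th u t), snd q + Rr u t * sin (Th u t)).

Lemma polar_family_continuous q Rr Th : jointly_continuous Rr -> jointly_continuous Th ->
  continuous_family (polar_family q Rr Th).
Proof.
  intros CRr CTh. apply continuous_family_pair; apply jointly_continuous_plus;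
    auto using jointly_continuous_cst; apply jointly_continuous_mult; auto;
    apply jointly_continuous_comp; auto using continuity_cos, continuity_sin.
Qed.

(* Two closed loops in the punctured eps-ball around q, both winding once
   around q, are homotopic there through closed loops: interpolate their
   radii and their angle lifts linearly. *)
Lemma polar_interpolation (q : pt) (eps : R) (a0 a1 : R -> pt) :
  continuous_path a0 -> continuous_path a1 -> a0 0 = a0 1 -> a1 0 = a1 1 ->
  (forall t, 0 < dist (a0 t) q < eps) -> (forall t, 0 < dist (a1 t) q < eps) ->
  winds_once a0 q -> winds_once a1 q ->
  exists K, continuous_family K /\ (forall u t, 0 < dist (K u t) q < eps) /\
    (forall u, K u 0 = K u 1) /\
    (forall t, 0 <= t <= 1 -> K 0 t = a0 t /\ K 1 t = a1 t).
Proof.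
  intros Ca0 Ca1 Cl0 Cl1 Hr0 Hr1 [th0 [Ct0 [Pt0 W0]]] [th1 [Ct1 [Pt1 W1]]].
  set (r0 := fun t => dist (a0 t) q). set (r1 := fun t => dist (a1 t) q).
  set (Rr := fun u t => (1 - clamp u) * r0 t + clamp u * r1 t).
  set (Th := fun u t => (1 - clamp u) * th0 (clamp t) + clamp u * th1 (clamp t)).
  assert (HRr : forall u t, 0 < Rr u t < eps)
    by (intros u t; unfold Rr, r0, r1; apply convex_comb_bounds; auto using clamp_in).
  assert (Cc : jointly_continuous (fun u t => clamp u))
    by (apply (jointly_continuous_comp clamp (fun u t => u));
        auto using clamp_continuous, jointly_continuous_fst).
  assert (Cc' : jointly_continuous (fun u t => 1 - clamp u)).
  { apply (jointly_continuous_comp (fun x => 1 - clamp x) (fun u t => u));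
      auto using jointly_continuous_fst.
    intro x. apply continuity_pt_minus; auto using continuity_pt_cst, clamp_continuous. }
  assert (CRr : jointly_continuous Rr).
  { apply jointly_continuous_plus; apply jointly_continuous_mult; auto;
      apply jointly_continuous_snd, continuity_pt_dist; auto. }
  assert (CTh : jointly_continuous Th).
  { apply jointly_continuous_plus; apply jointly_continuous_mult; auto;
      apply jointly_continuous_snd, clamp_extension_continuous; auto. }
  exists (polar_family q Rr Th). split; [|split; [|split]].
  - apply polar_family_continuous; auto.
  - intros u t. unfold polar_family. rewrite dist_polar by (specialize (HRr u t); lra). auto.
  - intros u. unfold polar_family.
    assert (E1 : Rr u 1 = Rr u 0) by (unfold Rr, r0, r1; rewrite Cl0, Cl1; reflexivity).
    assert (E2 : Th u 1 = Th u 0 + 2 * PI).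
    { unfold Th. rewrite (clamp_id 1), (clamp_id 0) by lra.
      replace (th0 1) with (th0 0 + 2 * PI) by lra.
      replace (th1 1) with (th1 0 + 2 * PI) by lra. ring. }
    rewrite E1, E2, cos_plus, sin_plus, cos_2PI, sin_2PI.
    f_equal; f_equal; f_equal; ring.
  - intros t Ht. unfold polar_family, Rr, Th. rewrite (clamp_id 0), (clamp_id 1), (clamp_id t) by lra.
    destruct (Pt0 t Ht) as [_ [E01 E02]]. destruct (Pt1 t Ht) as [_ [E11 E12]].
    unfold r0, r1.
    replace ((1 - 0) * th0 t + 0 * th1 t) with (th0 t) by ring.
    replace ((1 - 1) * th0 t + 1 * th1 t) with (th1 t) by ring.
    replace ((1 - 0) * dist (a0 t) q + 0 * dist (a1 t) q) with (dist (a0 t) q) by ring.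
    replace ((1 - 1) * dist (a0 t) q + 1 * dist (a1 t) q) with (dist (a1 t) q) by ring.
    split; apply pt_eq; simpl; lra.
Qed.

Definition small_loop (psi : pt -> pt) (y : pt) (e eps : R) (b : R -> pt) : Prop :=
  continuous_path b /\ b 0 = b 1 /\
  (forall t, b t <> y /\ dist y (b t) < e /\ dist (psi y) (psi (b t)) < eps) /\
  winds_once (fun t => psi (b t)) (psi y).

(* If psi has a continuous local inverse g on these balls, then of two
   small loops at y, one winds once around y iff the other does: the polar
   interpolation of their images, pulled back by g, is a homotopy between
   them avoiding y. *)
Lemma small_loops_wind_alike (psi g : pt -> pt) (y : pt) (e eps : R) (b0 b1 : R -> pt) :
  continuous2 psi ->
  (forall z, dist y z < e -> g (psi z) = z) ->
  (forall w, dist (psi y) w < eps -> psi (g w) = w /\ cont_at g w) ->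
  small_loop psi y e eps b0 -> small_loop psi y e eps b1 ->
  winds_once b0 y -> winds_once b1 y.
Proof.
  intros Cpsi Ginv Gcont L0 L1 W0.
  assert (Image : forall b, small_loop psi y e eps b ->
            continuous_path (fun t => psi (b t)) /\ psi (b 0) = psi (b 1) /\
            forall t, 0 < dist (psi (b t)) (psi y) < eps).
  { intros b [Cb [Clb [Hb _]]]. split; [apply continuous_path_comp; auto|].
    split; [rewrite Clb; auto|]. intros t. destruct (Hb t) as [Hne [He Heps]].
    rewrite dist_sym. split; auto. apply dist_pos. intro E. apply Hne.
    rewrite <- (Ginv (b t)), <- E by auto. apply Ginv. rewrite dist_self.
    pose proof (dist_nonneg y (b t)). lra. }
  destruct (Image b0 L0) as [Ca0 [Cl0 Hr0]]. destruct (Image b1 L1) as [Ca1 [Cl1 Hr1]].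
  destruct (polar_interpolation (psi y) eps _ _ Ca0 Ca1 Cl0 Cl1 Hr0 Hr1
              (proj2 (proj2 (proj2 L0))) (proj2 (proj2 (proj2 L1))))
    as [K [CK [HK [ClK EK]]]].
  assert (HKball : forall u t, dist (psi y) (K u t) < eps)
    by (intros u t; rewrite dist_sym; apply HK).
  assert (Back : forall b, small_loop psi y e eps b -> forall t, g (psi (b t)) = b t)
    by (intros b [_ [_ [Hb _]]] t; apply Ginv, Hb).
  apply (winds_once_ext (fun t => g (K 1 t))).
  { intros t Ht. rewrite (proj2 (EK t Ht)). apply Back; auto. }
  apply (winds_once_homotopy (fun u t => g (K u t))); try lra.
  - apply continuous_family_comp; auto. intros u t. apply Gcont; auto.
  - intros u t _ _ E. destruct (Gcont (K u t) (HKball u t)) as [E' _].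
    rewrite E in E'. specialize (HK u t). rewrite E', dist_self in HK. lra.
  - intros u _. rewrite ClK. reflexivity.
  - apply (winds_once_ext b0); auto.
    intros t Ht. rewrite (proj1 (EK t Ht)). symmetry. apply Back; auto.
Qed.

(* Orientation transfers along a continuous injective map h with
   psi o h = phi, when phi and psi preserve orientation and psi is a local
   homeomorphism: a small circle around h x and the image under h of a
   small circle around x are both small loops at h x for psi, and the
   former winds once around h x. *)
Lemma orientation_transfer (phi psi h : pt -> pt) :
  local_homeo psi -> orientation_preserving psi -> orientation_preserving phi ->
  continuous2 h -> (forall a b, h a = h b -> a = b) -> (forall z, psi (h z) = phi z) ->
  orientation_preserving h.
Proof.
  intros Hpsi Opsi Ophi Hh Hinj Hcomp x.
  set (y := h x).
  destruct (local_homeo_local_inverse psi y Hpsi) as [e [He [eps [Heps [g [Ginv Gcont]]]]]].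
  destruct (Opsi y) as [rp [Hrp Wpsi]].
  destruct (Ophi x) as [rf [Hrf Wphi]].
  destruct (proj1 Hpsi y eps Heps) as [dp [Hdp Cpsi]].
  destruct (Hh x (Rmin e dp) (Rmin_pos _ _ He Hdp)) as [dh [Hdh Ch]].
  pose proof (Rmin_l e dp). pose proof (Rmin_r e dp).
  set (rho := Rmin rp (Rmin e dp) / 2).
  assert (Hrho : 0 < rho /\ rho < rp /\ rho < e /\ rho < dp).
  { pose proof (Rmin_l rp (Rmin e dp)). pose proof (Rmin_r rp (Rmin e dp)).
    assert (0 < Rmin rp (Rmin e dp)) by (apply Rmin_pos; auto; apply Rmin_pos; auto).
    unfold rho. lra. }
  exists (Rmin rf dh). split. apply Rmin_pos; auto.
  intros s Hs. pose proof (Rmin_l rf dh). pose proof (Rmin_r rf dh).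
  apply (small_loops_wind_alike psi g y e eps (circ y rho)); auto.
  - apply (proj1 Hpsi).
  - split; [apply circ_continuous | split; [apply circ_closed | split]].
    + intros t. assert (dist y (circ y rho t) = rho) by (rewrite dist_sym, circ_dist; lra).
      split; [intro E; rewrite E, dist_self in *; lra | split; [lra | apply Cpsi; lra]].
    + apply Wpsi. lra.
  - split; [apply continuous_path_comp, circ_continuous; auto | split].
    + rewrite circ_closed. reflexivity.
    + split.
      * intros t. assert (Hc : dist x (circ x s t) = s) by (rewrite dist_sym, circ_dist; lra).
        specialize (Ch (circ x s t) ltac:(lra)).
        split; [|split; [unfold y; lra | apply Cpsi; unfold y; lra]].
        intro E. apply Hinj in E. rewrite E, dist_self in Hc. lra.
      * apply (winds_once_ext (fun t => phi (circ x s t))); [intros; symmetry; apply Hcomp|].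
        unfold y. rewrite Hcomp. apply Wphi. lra.
  - apply winds_once_circ. lra.
Qed.

Lemma immersion_round_trip (phi psi io ka : pt -> pt) :
  locally_injective phi -> continuous2 io -> continuous2 ka ->
  io origin = origin -> ka origin = origin ->
  (forall x, psi (io x) = phi x) -> (forall x, phi (ka x) = psi x) ->
  forall x, ka (io x) = x.
Proof.
  intros Hphi Cio Cka Hio0 Hka0 Hio Hka.
  apply (lifts_unique phi (fun x => ka (io x)) (fun x => x));
    auto using continuous2_comp, continuous2_id.
  - rewrite Hio0, Hka0. reflexivity.
  - intros x. rewrite Hka, Hio. reflexivity.
Qed.

Lemma immerses_antisym (phi psi : pt -> pt) : pointed_lh phi -> pointed_lh psi ->
  immerses phi psi -> immerses psi phi -> iso phi psi.
Proof.
  intros [Lphi [Ophi _]] [Lpsi [Opsi _]] [io [Cio [Hio0 Hio]]] [ka [Cka [Hka0 Hka]]].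
  assert (KI : forall x, ka (io x) = x)
    by (apply (immersion_round_trip phi psi); auto using local_homeo_locally_injective).
  assert (IK : forall x, io (ka x) = x)
    by (apply (immersion_round_trip psi phi); auto using local_homeo_locally_injective).
  exists io. split; [split; auto; exists ka; auto | split; [|auto]].
  apply (orientation_transfer phi psi io); auto.
  intros a b E. rewrite <- (KI a), <- (KI b), E. reflexivity.
Qed.

Lemma immerses_refl (phi : pt -> pt) : immerses phi phi.
Proof. exists (fun x => x). split. apply continuous2_id. split; reflexivity. Qed.

Lemma immerses_trans (phi psi chi : pt -> pt) :
  immerses phi psi -> immerses psi chi -> immerses phi chi.
Proof.
  intros [i1 [C1 [H10 H1]]] [i2 [C2 [H20 H2]]].
  exists (fun x => i2 (i1 x)). split; [apply continuous2_comp; auto | split].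
  - rewrite H10, H20. reflexivity.
  - intros x. rewrite H2, H1. reflexivity.
Qed.

Lemma iso_immerses (phi psi : pt -> pt) : iso phi psi -> immerses phi psi /\ immerses psi phi.
Proof.
  intros [h [[Ch [g [Cg [Hgh Hhg]]]] [_ [H0 Hh]]]]. split.
  - exists h. auto.
  - exists g. split; [auto | split].
    + rewrite <- H0 at 1. apply Hgh.
    + intros x. rewrite <- Hh, Hhg. reflexivity.
Qed.

Lemma immerses_iso_compat (phi phi' psi psi' : pt -> pt) :
  iso phi phi' -> iso psi psi' -> immerses phi psi -> immerses phi' psi'.
Proof.
  intros Hphi Hpsi H. apply immerses_trans with phi; [apply (iso_immerses _ _ Hphi)|].
  apply immerses_trans with psi; [auto | apply (iso_immerses _ _ Hpsi)].
Qed.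

Theorem mainTheorem1 :
  (forall phi psi : pt -> pt, pointed_lh phi -> pointed_lh psi ->
     immerses phi psi -> immerses psi phi -> iso phi psi) /\
  (forall phi : pt -> pt, pointed_lh phi -> immerses phi phi) /\
  (forall phi psi chi : pt -> pt, pointed_lh phi -> pointed_lh psi -> pointed_lh chi ->
     immerses phi psi -> immerses psi chi -> immerses phi chi) /\
  (forall phi phi' psi psi' : pt -> pt,
     pointed_lh phi -> pointed_lh phi' -> pointed_lh psi -> pointed_lh psi' ->
     iso phi phi' -> iso psi psi' -> immerses phi psi -> immerses phi' psi').
Proof.
  split; [exact immerses_antisym | split; [|split]].
  - intros phi _. apply immerses_refl.
  - intros phi psi chi _ _ _. apply immerses_trans.
  - intros phi phi' psi psi' _ _ _ _. apply immerses_iso_compat.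
Qed.
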